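(* Let $(S,\le,\to,|\cdot|,\Pr)$ be a closed stochastic well-structured transition system, let $T\subseteq S$ be upward-closed, and let $X_0,X_1,\dots$ be an execution of the system. Let $\tau$ be the first time at which $X_\tau\in T$ or $X_\tau\notin\mathrm{Pred}^*(T)$. Then there is a constant $k$ (independent of $X_0$) such that $\mathbb{E}[\tau]=O(|X_0|^k)$, where the implied constant is also independent of $X_0$.
   Context: A quasi-order is a reflexive, transitive relation. A well-quasi-order (wqo) $\le$ on a set $S$ is a quasi-order such that every infinite sequence $x_0,x_1,\dots$ in $S$ has indices $i<j$ with $x_i\le x_j$. A set $T\subseteq S$ is upward-closed if $x\in T$ and $x\le y$ imply $y\in T$. A well-structured transition system (WSTS) $(S,\le,\to)$ is a set $S$ of configurations with a wqo $\le$ and a binary transition relation $\to$ that is compatible with $\le$: whenever $s\to s'$ and $s\le t$, there exists $t'$ with $t\to t'$ and $s'\le t'$. A stochastic WSTS (SWSTS) $(S,\le,\to,|\cdot|,\Pr)$ is a WSTS together with a function assigning each configuration $s$ a positive weight $|s|$ and a transition probability $\Pr[s\to s']$ to each transition, making an execution $X_0,X_1,\dots$ a Markov chain with $\Pr[X_{i+1}=s'\mid X_i=s]=\Pr[s\to s']$; it is required (polynomial transition probabilities) that for each transition $s\to s'$ there are constants $k_0\ge 0$, $c_0>0$ such that for every configuration $t\ge s$, $\Pr[X_{i+1}\ge s'\mid X_i=t]\ge c_0|t|^{-k_0}$. The SWSTS is closed if $s\to s'$ implies $|s|=|s'|$. $\mathrm{Pred}^*(T)$ is the set of configurations from which some element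 of $T$ is reachable by a finite (possibly empty) sequence of transitions. *)

From HB Require Import structures.
From mathcomp Require Import all_boot all_order all_algebra.
From mathcomp Require Import all_classical all_reals all_analysis.
Set Implicit Arguments. Unset Strict Implicit. Unset Printing Implicit Defensive.
Import Order.TTheory GRing.Theory Num.Theory.
Local Open Scope classical_set_scope.
Local Open Scope ring_scope.

Section SWSTS.
Context {R : realType} {S : choiceType}.

Definition quasi_order (le : S -> S -> Prop) : Prop :=
  (forall x, le x x) /\ (forall x y z, le x y -> le y z -> le x z).

Definition wqo (le : S -> S -> Prop) : Prop :=
  quasi_order le /\
  forall f : nat -> S, exists i j, (i < j)%N /\ le (f i) (f j).

Definition upward_closed (le : S -> S -> Prop) (T : set S) : Prop :=
  forall x y, T x -> le x y -> T y.

Definition compatible (le step : S -> S -> Prop) : Prop :=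
  forall s s' t, step s s' -> le s t -> exists t', step t t' /\ le s' t'.

Definition WSTS (le step : S -> S -> Prop) : Prop :=
  wqo le /\ compatible le step.

Inductive reach (step : S -> S -> Prop) : S -> S -> Prop :=
| reach_refl s : reach step s s
| reach_step s s' s'' : step s s' -> reach step s' s'' -> reach step s s''.

Definition Pred_star (step : S -> S -> Prop) (T : set S) : set S :=
  [set s | exists t, T t /\ reach step s t].

(* Stochastic WSTS: weights w, transition probabilities P s s' = Pr[s -> s']. *)
Definition SWSTS (le step : S -> S -> Prop) (w : S -> R) (P : S -> S -> R)
  : Prop :=
  [/\ WSTS le step,
      (forall s, 0 < w s),
      (forall s s', 0 <= P s s') /\
      (forall s s', 0 < P s s' <-> step s s'),
      (forall s, (exists s', step s s') ->
          (\esum_(s' in [set: S]) (P s s')%:E = 1)%E) &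
      (forall s s', step s s' -> exists k0 c0 : R, 0 <= k0 /\ 0 < c0 /\
         forall t, le s t ->
           ((c0 * (w t `^ (- k0)))%:E <=
              \esum_(t' in [set t' | le s' t']) (P t t')%:E)%E)].

Definition closed_SWSTS (le step : S -> S -> Prop) (w : S -> R)
  (P : S -> S -> R) : Prop :=
  SWSTS le step w P /\ (forall s s', step s s' -> w s = w s').

Definition stopped (step : S -> S -> Prop) (T : set S) (s : S) : Prop :=
  T s \/ ~ Pred_star step T s.

(* surv P step T n s = Pr[tau > n | X_0 = s] for the Markov chain with
   transition probabilities P *)
Fixpoint surv (step : S -> S -> Prop) (P : S -> S -> R) (T : set S)
  (n : nat) (s : S) : \bar R :=
  if `[< stopped step T s >] then 0%E else
  match n with
  | 0 => 1%E
  | n'.+1 => (\esum_(s' in [set: S]) ((P s s')%:E * surv step P T n' s'))%E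
  end.

(* E[tau | X_0 = s] = sum_{n >= 0} Pr[tau > n | X_0 = s] *)
Definition expected_tau (step : S -> S -> Prop) (P : S -> S -> R)
  (T : set S) (s : S) : \bar R :=
  (\sum_(n <oo) surv step P T n s)%E.

End SWSTS.

(* Pred*(T) has a finite basis b_1, ..., b_m since the order is a wqo.  Fix a
   path of length L_i from b_i into T.  Applying the polynomial lower bound on
   transition probabilities step by step, an execution started above b_i at
   weight W tracks the path from above, hence stops, within L_i steps with
   probability at least c_i W^-K_i.  The weight is constant along executions
   (the system is closed), so with L = max L_i, c = min c_i and K = max K_i
   every block of L steps started outside the stopping set stops with
   probability at least p = c W^-K.  Thus Pr[tau > n] <= (1 - p)^(n / L) and
   E[tau] <= L / p = (L / c) W^K. *)

From HB Require Import structures.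
From mathcomp Require Import all_boot all_order all_algebra.
From mathcomp Require Import all_classical all_reals all_analysis.
From mathcomp Require Import ring lra.
Import Order.TTheory GRing.Theory Num.Theory.
Local Open Scope classical_set_scope.
Local Open Scope ring_scope.
Set Implicit Arguments. Unset Strict Implicit.

Lemma finite_basis (S : choiceType) (le : S -> S -> Prop) (U : set S) :
    (forall f : nat -> S, exists i j, (i < j)%N /\ le (f i) (f j)) ->
  exists2 bs : seq S, (forall b, b \in bs -> U b) &
    forall x, U x -> exists2 b, b \in bs & le b x.
Proof.
move=> good; apply: contrapT => no_basis.
(* Otherwise, choosing at each stage an element of U above none of the
   previously chosen ones yields a sequence with no increasing pair. *)
pose avoid (bs : seq S) := [set x | U x /\ forall b, b \in bs -> ~ le b x].
have avoidP bs : (forall b, b \in bs -> U b) -> exists x, avoid bs x.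
  move=> bsU; apply: contrapT => /forallNP none; apply: no_basis.
  exists bs => // x Ux; apply: contrapT => nle; apply: (none x).
  by split=> // b bb lbx; apply: nle; exists b.
have [x0 _] : exists x, avoid [::] x by apply: avoidP.
pose next bs := xget x0 (avoid bs).
pose g := fix g n := if n is n'.+1 then next (g n') :: g n' else [::].
have gU n b : b \in g n -> U b.
  elim: n b => [//|n IH] b; rewrite inE => /predU1P [->|]; last exact: IH.
  by case: (xgetPex x0 (avoidP _ IH)).
have g_next i j : (i < j)%N -> next (g i) \in g j.
  elim: j => [//|j IH]; rewrite ltnS leq_eqVlt => /predU1P [->|/IH].
    exact: mem_head.
  by rewrite inE => ->; rewrite orbT.
have [i [j [ij le_ij]]] := good (fun n => next (g n)).
by case: (xgetPex x0 (avoidP _ (gU j))) => _ /(_ _ (g_next i j ij)).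
Qed.

Lemma esum_mull_le (R : realType) (S : choiceType) (I : set S) (c : R)
    (a : S -> \bar R) : 0 <= c -> (forall i, 0 <= a i)%E ->
  (\esum_(i in I) (c%:E * a i) <= c%:E * \esum_(i in I) a i)%E.
Proof.
move=> c0 a0; apply: ge_ereal_sup => _ [X [finX XI]] <-.
rewrite -ge0_mule_fsumr //; apply: lee_wpmul2l; first by rewrite lee_fin.
by apply: ereal_sup_ubound; exists X.
Qed.

Section Geometric.
Variable R : realType.

Lemma div_expr_gt0_le1 (c W : R) K : 1 <= W -> 0 < c <= 1 ->
  0 < c / W ^+ K <= 1.
Proof.
move=> W1 /andP [c0 c1]; have W0 : 0 < W by apply: lt_le_trans W1.
rewrite divr_gt0 ?exprn_gt0 //= ler_pdivrMr ?exprn_gt0 // mul1r.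
by apply: le_trans c1 _; rewrite exprn_ege1.
Qed.

Lemma div_exprS_trunc_le_powRN (c0 k0 W : R) : 0 < c0 -> 0 <= k0 -> 1 <= W ->
  Num.min 1 c0 / W ^+ (Num.truncn k0).+1 <= c0 * W `^ (- k0).
Proof.
move=> c0_gt0 k0_ge0 W1; have W0 : 0 < W by apply: lt_le_trans W1.
apply: ler_pM; rewrite ?invr_ge0 ?exprn_ge0 ?le_min ?ler01 ?(ltW c0_gt0)
  ?(ltW W0) ?ge_min ?lexx ?orbT //.
rewrite -powR_mulrn ?(ltW W0) // -powRN; apply: ler_powR => //.
by rewrite lerN2; apply/ltW/truncnS_gt.
Qed.

Lemma sum_geometric_le (p : R) m : 0 < p <= 1 ->
  \sum_(0 <= i < m) (1 - p) ^+ i <= p^-1.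
Proof.
move=> /andP [p0 p1].
have -> : \sum_(0 <= i < m) (1 - p) ^+ i = (1 - (1 - p) ^+ m) / p.
  elim: m => [|m IH]; first by rewrite big_nil expr0 subrr mul0r.
  rewrite big_nat_recr //= IH exprS; field; exact: lt0r_neq0.
by rewrite ler_pdivrMr // mulVf ?lt0r_neq0 // gerBl exprn_ge0 // subr_ge0.
Qed.

Lemma sum_expr_divn (q : R) L m : (0 < L)%N ->
  \sum_(0 <= k < m * L) q ^+ (k %/ L) = L%:R * \sum_(0 <= i < m) q ^+ i.
Proof.
move=> L_gt0; rewrite big_nat_mul mulr_sumr; apply: eq_bigr => i _.
rewrite (eq_big_nat _ _ (F2 := fun=> q ^+ i)) ?sumr_const_nat ?mulr_natl.
  by rewrite mulSn addnK.
move=> k /andP [ik ki]; congr (_ ^+ _); apply/eqP.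
by rewrite eqn_leq leq_divRL // -ltnS ltn_divLR // ik ki.
Qed.

Lemma nneseries_le_geometric_blocks (u : (\bar R)^nat) (p : R) L :
    (0 < L)%N -> 0 < p <= 1 -> (forall n, 0 <= u n)%E ->
    (forall n, u n <= ((1 - p) ^+ (n %/ L))%:E)%E ->
  (\sum_(n <oo) u n <= (L%:R / p)%:E)%E.
Proof.
move=> L_gt0 p01 u_ge0 u_le; have /andP [_ p1] := p01.
apply: lime_le; first exact: is_cvg_ereal_nneg_natsum.
apply: nearW => N.
apply: (@le_trans _ _ (\sum_(0 <= n < N) ((1 - p) ^+ (n %/ L))%:E)%E).
  by apply: lee_sum => n _; exact: u_le.
rewrite sumEFin lee_fin.
apply: (@le_trans _ _ (\sum_(0 <= k < N * L) (1 - p) ^+ (k %/ L))).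
  rewrite [leRHS](big_cat_nat _ (n := N)) ?leq_pmulr //= lerDl.
  by apply: sumr_ge0 => k _; rewrite exprn_ge0 // subr_ge0.
by rewrite sum_expr_divn // ler_wpM2l // sum_geometric_le.
Qed.

End Geometric.

Section Survival.
Variables (R : realType) (S : choiceType).
Variables (le step : S -> S -> Prop) (w : S -> R) (P : S -> S -> R).
Variable T : set S.

Local Notation stopped := (stopped step T).
Local Notation surv := (surv step P T).

Lemma not_stopped_step s : ~ stopped s -> exists s', step s s'.
Proof.
move=> /not_orP [nTs /contrapT [z [Tz rz]]].
by case: rz Tz nTs => [//|s0 s' z' ss' _ _ _]; exists s'.
Qed.

Lemma surv_stopped n s : stopped s -> surv n s = 0%E.
Proof. by case: n => [|n] /= ?; rewrite asboolT. Qed.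

Lemma surv_succ n s : ~ stopped s ->
  surv n.+1 s = (\esum_(s' in [set: S]) ((P s s')%:E * surv n s'))%E.
Proof. by move=> ? /=; rewrite asboolF. Qed.

Definition prob_to (s : S) (U : set S) : \bar R :=
  (\esum_(x in U) (P s x)%:E)%E.

Hypothesis sys : closed_SWSTS le step w P.
Hypothesis T_up : upward_closed le T.

Let P_ge0 s s' : 0 <= P s s'.
Proof. by case: sys => -[_ _ []]. Qed.

Let step_of_P_neq0 s s' : P s s' != 0 -> step s s'.
Proof.
by case: sys => -[_ _ [_ /(_ s s') <-]] _ _ _ P_neq0; rewrite lt_def P_neq0 P_ge0.
Qed.

Let P_sum1 s : (exists s', step s s') ->
  (\esum_(s' in [set: S]) (P s s')%:E = 1)%E.
Proof. by case: sys => -[_ _ _ sum1 _] _; apply: sum1. Qed.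

Let w_step s s' : step s s' -> w s = w s'.
Proof. by case: sys => _; apply. Qed.

Let poly_trans_prob s s' : step s s' -> exists k0 c0 : R, 0 <= k0 /\ 0 < c0 /\
  forall t, le s t ->
    ((c0 * w t `^ (- k0))%:E <= prob_to t [set x | le s' x])%E.
Proof. by case: sys => -[_ _ _ _ poly] _; apply: poly. Qed.

Let le_good (f : nat -> S) : exists i j, (i < j)%N /\ le (f i) (f j).
Proof. by case: sys => -[[[_ good] _] _ _ _ _] _. Qed.

Lemma surv_ge0 n s : (0 <= surv n s)%E.
Proof.
elim: n s => [|n IH] s /=; case: ifP => // _.
by apply: esum_ge0 => x _; rewrite mule_ge0 ?lee_fin.
Qed.

Lemma surv_le1 n s : (surv n s <= 1)%E.
Proof.
elim: n s => [|n IH] s; first by rewrite /=; case: ifP.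
have [/surv_stopped ->//|nst] := pselect (stopped s).
rewrite surv_succ // -(P_sum1 (not_stopped_step nst)).
by apply: le_esum => x _; rewrite -[leRHS]mule1 lee_wpmul2l ?lee_fin.
Qed.

Lemma prob_to_split s U : (exists s', step s s') ->
  exists a : R, prob_to s U = a%:E /\ prob_to s (~` U) = (1 - a)%:E.
Proof.
move=> /P_sum1; rewrite (esumID U) ?setTI; last by move=> x _; rewrite lee_fin.
rewrite -/(prob_to s U) -/(prob_to s (~` U)).
have: (0 <= prob_to s U)%E by apply: esum_ge0 => x _; rewrite lee_fin.
have: (0 <= prob_to s (~` U))%E by apply: esum_ge0 => x _; rewrite lee_fin.
case: (prob_to s U) => [a| |]; case: (prob_to s (~` U)) => [e| |] //= _ _.
by move=> /eqP; rewrite eqe => /eqP <-; exists a; rewrite addrAC subrr add0r.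
Qed.

Lemma esum_surv_le s U n B : 0 <= B ->
    (forall x, step s x -> U x -> (surv n x <= B%:E)%E) ->
  (\esum_(x in U) ((P s x)%:E * surv n x) <= B%:E * prob_to s U)%E.
Proof.
move=> B0 surv_le.
have P_ge0E x : (0 <= (P s x)%:E)%E by rewrite lee_fin.
apply: (le_trans _ (esum_mull_le U B0 P_ge0E)).
apply: le_esum => x Ux; rewrite [in leRHS]muleC.
have [->|/step_of_P_neq0 sx] := eqVneq (P s x) 0; first by rewrite !mul0e.
by rewrite lee_wpmul2l ?lee_fin ?surv_le.
Qed.

Lemma surv_succ_le s U n B1 B2 : ~ stopped s -> 0 <= B1 -> 0 <= B2 ->
    (forall x, step s x -> U x -> (surv n x <= B1%:E)%E) ->
    (forall x, step s x -> ~ U x -> (surv n x <= B2%:E)%E) ->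
  (surv n.+1 s <= B1%:E * prob_to s U + B2%:E * prob_to s (~` U))%E.
Proof.
move=> nst B1_ge0 B2_ge0 le_in le_out.
rewrite surv_succ // (esumID U) ?setTI; last first.
  by move=> x _; rewrite mule_ge0 ?lee_fin ?surv_ge0.
by rewrite leeD ?esum_surv_le.
Qed.

Definition surv_bounded (W : R) (n : nat) (B : R) : Prop :=
  forall s r, w s = W -> (surv (n + r) s <= B%:E)%E.

Definition contracts (A : set S) (L : nat) (c : R) (K : nat) : Prop :=
  forall W n B, 1 <= W -> 0 <= B -> surv_bounded W n B ->
  forall t, A t -> w t = W -> (surv (n + L) t <= ((1 - c / W ^+ K) * B)%:E)%E.

Lemma contracts_sub A A' L c K :
  A `<=` A' -> contracts A' L c K -> contracts A L c K.
Proof. by move=> AA' contr W n B W1 B0 bnd t /AA'; apply: contr. Qed.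

Lemma contracts_weaken A L c K L' c' K' : contracts A L c K ->
  (L <= L')%N -> 0 < c' <= c -> (K <= K')%N -> contracts A L' c' K'.
Proof.
move=> contr LL' /andP [c'_gt0 c'c] KK' W n B W1 B0 bnd t At wt.
have W0 : 0 < W by apply: lt_le_trans W1.
rewrite -(subnK LL') addnA.
apply: le_trans (contr W _ B W1 B0 _ t At wt) _.
  by move=> s r ws; rewrite -addnA; apply: bnd.
rewrite lee_fin ler_wpM2r // lerD2l lerN2 ler_pM ?(ltW c'_gt0) //.
  by rewrite invr_ge0 exprn_ge0 // ltW.
by rewrite lef_pV2 ?posrE ?exprn_gt0 // ler_weXn2l.
Qed.

Lemma contracts_setU A A' L c K L' c' K' : 0 < c -> 0 < c' ->
    contracts A L c K -> contracts A' L' c' K' ->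
  contracts (A `|` A') (maxn L L') (Num.min c c') (maxn K K').
Proof.
move=> c_gt0 c'_gt0 contr contr' W n B W1 B0 bnd t [At|A't].
  apply: (contracts_weaken contr) At; rewrite ?leq_maxl //.
  by rewrite lt_min c_gt0 c'_gt0 ge_min lexx.
apply: (contracts_weaken contr') A't; rewrite ?leq_maxr //.
by rewrite lt_min c_gt0 c'_gt0 ge_min lexx orbT.
Qed.

Lemma contracts_T : contracts T 0 1 0.
Proof.
move=> W n B _ _ _ t Tt _.
by rewrite surv_stopped; [rewrite expr0 divr1 subrr mul0r|left].
Qed.

Lemma contracts_step s s' L c K : step s s' -> 0 < c <= 1 ->
    contracts (le s') L c K ->
  exists c' K', 0 < c' <= 1 /\ contracts (le s) L.+1 c' K'.
Proof.
move=> ss' c01 contr'.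
have [k0 [c0 [k0_ge0 [c0_gt0 mass_ge]]]] := poly_trans_prob ss'.
set c1 := Num.min 1 c0; set K0 := (Num.truncn k0).+1.
have c1_01 : 0 < c1 <= 1 by rewrite lt_min ltr01 c0_gt0 ge_min lexx.
exists (c1 * c), (K0 + K)%N; split.
  case/andP: c1_01 => c1_gt0 c1_le1; case/andP: c01 => c_gt0 c_le1.
  by rewrite mulr_gt0 //= mulr_ile1 // ltW.
move=> W n B W1 B0 bnd t st wt.
set p := c / W ^+ K; set q := c1 / W ^+ K0.
have -> : c1 * c / W ^+ (K0 + K) = q * p by rewrite exprD invfM mulrACA.
have /andP [/ltW p_ge0 p_le1] : 0 < p <= 1 := div_expr_gt0_le1 K W1 c01.
have /andP [/ltW q_ge0 q_le1] : 0 < q <= 1 := div_expr_gt0_le1 K0 W1 c1_01.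
rewrite addnS; have [/surv_stopped ->|nst] := pselect (stopped t).
  by rewrite lee_fin mulr_ge0 // subr_ge0 mulr_ile1.
have [a [Ea Ee]] := prob_to_split [set x | le s' x] (not_stopped_step nst).
have q_le_a : q <= a.
  rewrite -lee_fin -Ea; apply: le_trans (mass_ge t st); rewrite lee_fin wt.
  exact: div_exprS_trunc_le_powRN.
apply: le_trans (surv_succ_le (U := [set x | le s' x]) (B1 := (1 - p) * B)
  (B2 := B) nst _ B0 _ _) _.
- by rewrite mulr_ge0 // subr_ge0.
- by move=> x tx s'x; apply: contr' => //; rewrite -(w_step tx).
- by move=> x tx _; apply: bnd; rewrite -(w_step tx).
(* The mass a >= q reaching the cone above s' shrinks the bound by 1 - p. *)
rewrite Ea Ee -!EFinM -EFinD lee_fin.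
have a_q : 0 <= a - q by rewrite subr_ge0.
have := mulr_ge0 (mulr_ge0 p_ge0 B0) a_q; nra.
Qed.

Lemma contracts_reach y z : reach step y z -> T z ->
  exists L c K, 0 < c <= 1 /\ contracts (le y) L c K.
Proof.
elim=> [s Ts|s s' s'' ss' _ IH /IH [L [c [K [c01 contr']]]]].
  exists 0%N, 1, 0%N; split; first by rewrite ltr01 lexx.
  by apply: contracts_sub contracts_T => t /(T_up Ts).
have [c' [K' [c'01 contr]]] := contracts_step ss' c01 contr'.
by exists L.+1, c', K'.
Qed.

Lemma contracts_cones (bs : seq S) :
    (forall b, b \in bs -> Pred_star step T b) ->
  exists L c K, [/\ (0 < L)%N, 0 < c <= 1 &
    contracts [set x | exists2 b, b \in bs & le b x] L c K].
Proof.
elim: bs => [_|b bs IH bsP].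
  exists 1%N, 1, 0%N; split; rewrite ?ltr01 ?lexx //.
  by move=> W n B _ _ _ t [b]; rewrite in_nil.
have [|L [c [K [L_gt0 /andP [c_gt0 c_le1] contr]]]] := IH.
  by move=> b' b'bs; apply: bsP; rewrite inE b'bs orbT.
have [z [Tz bz]] := bsP b (mem_head _ _).
have [Lb [cb [Kb [/andP [cb_gt0 cb_le1] contrb]]]] := contracts_reach bz Tz.
exists (maxn Lb L), (Num.min cb c), (maxn Kb K); split.
- by rewrite leq_max L_gt0 orbT.
- by rewrite lt_min cb_gt0 c_gt0 ge_min cb_le1.
apply: contracts_sub (contracts_setU cb_gt0 c_gt0 contrb contr).
move=> x [b']; rewrite inE => /predU1P [-> bx|b'bs b'x]; first by left.
by right; exists b'.
Qed.

Lemma contracts_Pred_star : exists L c K,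
  [/\ (0 < L)%N, 0 < c <= 1 & contracts (Pred_star step T) L c K].
Proof.
have [bs bsP bs_basis] := finite_basis (Pred_star step T) le_good.
have [L [c [K [L_gt0 c01 contr]]]] := contracts_cones bsP.
by exists L, c, K; split=> //; apply: contracts_sub contr => x /bs_basis.
Qed.

Lemma surv_bounded_contract L c K W n B :
    contracts (Pred_star step T) L c K -> 0 < c <= 1 -> 1 <= W -> 0 <= B ->
  surv_bounded W n B -> surv_bounded W (n + L) ((1 - c / W ^+ K) * B).
Proof.
move=> contr c01 W1 B0 bnd s r ws.
have [/surv_stopped ->|/not_orP [_ /contrapT Ps]] := pselect (stopped s).
  have /andP [_ p_le1] := div_expr_gt0_le1 K W1 c01.
  by rewrite lee_fin mulr_ge0 // subr_ge0.
rewrite addnAC; apply: contr Ps ws => //.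
by move=> s' r' ws'; rewrite -addnA; apply: bnd.
Qed.

Lemma surv_le_geometric L c K s n :
    contracts (Pred_star step T) L c K -> 0 < c <= 1 -> 1 <= w s ->
  (surv n s <= ((1 - c / w s ^+ K) ^+ (n %/ L))%:E)%E.
Proof.
move=> contr c01 W1.
have /andP [_ p_le1] := div_expr_gt0_le1 K W1 c01.
have bnd m : surv_bounded (w s) (m * L) ((1 - c / w s ^+ K) ^+ m).
  elim: m => [|m IH]; first by move=> x r _; apply: surv_le1.
  rewrite mulSnr exprS; apply: surv_bounded_contract => //.
  by rewrite exprn_ge0 // subr_ge0.
by rewrite {1}(divn_eq n L); apply: bnd.
Qed.

End Survival.

Theorem theorem4 (R : realType) (S : choiceType)
  (le step : S -> S -> Prop) (w : S -> R) (P : S -> S -> R) (T : set S) :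
  closed_SWSTS le step w P ->
  upward_closed le T ->
  exists (k : nat) (C N : R), 0 < C /\
    forall x0 : S, N <= w x0 ->
      (expected_tau step P T x0 <= (C * w x0 ^+ k)%:E)%E.
Proof.
move=> sys T_up.
have [L [c [K [L_gt0 c01 contr]]]] := contracts_Pred_star sys T_up.
exists K, (L%:R / c), 1; split.
  by case/andP: c01 => c_gt0 _; rewrite divr_gt0 // ltr0n.
move=> x0 W1.
apply: le_trans (nneseries_le_geometric_blocks L_gt0 (div_expr_gt0_le1 K W1 c01)
  (surv_ge0 T sys ^~ x0) (fun n => surv_le_geometric sys n contr c01 W1)) _.
by rewrite lee_fin invf_div mulrA mulrAC.
Qed.
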